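(* Let $(R,d)$ be a differential ring having Property (P). (i) For any morphism $\varphi:M\to N$ of finite free differential modules over $R$, the kernel and cokernel of $\varphi$ (as differential modules) are again finite free; consequently the category of finite free differential modules over $R$ is an abelian subcategory of the category of differential modules over $R$. (ii) If $\varphi:M\to N$ is an injective morphism of finite free differential modules over $R$ and $M$, $N$ have the same rank, then $\varphi$ is an isomorphism. (iii) If $\varphi:M\to N$ is an injective morphism of finite free differential modules over $R$, then $\wedge^n\varphi:\wedge^nM\to\wedge^nN$ is injective for every $n\in\mathbb N$.
   Context: A differential ring is a commutative ring $R$ with a derivation $d$. A differential module over $R$ is an $R$-module $M$ with an additive map $D$ satisfying $D(rx)=d(r)x+rD(x)$; morphisms are $R$-linear maps commuting with $D$; it is finite free of rank $m$ if the underlying module is. Exterior powers carry $D(x_1\wedge\dots\wedge x_n)=\sum_i x_1\wedge\dots\wedge D(x_i)\wedge\dots\wedge x_n$. A ring is an elementary divisor ring if every matrix $A\in M_{m\times n}(R)$ can be brought, by multiplication by invertible matrices on both sides, to a diagonal matrix with diagonal entries $d_1\mid d_2\mid\dots\mid d_{\min(m,n)}$; an elementary divisor domain is such an integral domain. $R$ satisfies Condition (S) if every principal ideal $I$ with $d(I)\subset I$ is $(0)$ or $(1)$. Property (P): $R$ is an elementary divisor domain satisfying Condition (S). *)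

From HB Require Import structures.
From mathcomp Require Import all_boot all_order all_algebra.
Set Implicit Arguments. Unset Strict Implicit. Unset Printing Implicit Defensive.
Import Order.TTheory GRing.Theory Num.Theory.
Local Open Scope ring_scope.

Section Defs.
Variable R : idomainType.

Definition is_derivation (d : R -> R) : Prop :=
  (forall x y, d (x + y) = d x + d y) /\ (forall x y, d (x * y) = d x * y + x * d y).

Definition dvdR (a b : R) : Prop := exists c, b = c * a.

Definition diag_divchain m n (D : 'M[R]_(m, n)) : Prop :=
  (forall (i : 'I_m) (j : 'I_n), (i : nat) <> j -> D i j = 0) /\
  (forall (i1 i2 : 'I_m) (j1 j2 : 'I_n),
      (i1 : nat) = j1 -> (i2 : nat) = j2 -> (i1 <= i2)%N -> dvdR (D i1 j1) (D i2 j2)).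

Definition elementary_divisor_ring : Prop :=
  forall m n (A : 'M[R]_(m, n)), exists (P : 'M[R]_m) (Q : 'M[R]_n),
    P \in unitmx /\ Q \in unitmx /\ diag_divchain (P *m A *m Q).

Definition pideal (a : R) (x : R) : Prop := exists r, x = r * a.

Definition condition_S (d : R -> R) : Prop :=
  forall a : R, (forall x, pideal a x -> pideal a (d x)) ->
    (forall x, pideal a x <-> x = 0) \/ (forall x, pideal a x).

(* Property (P): R (an integral domain, by its type) is an elementary divisor
   domain satisfying Condition (S). *)
Definition property_P (d : R -> R) : Prop :=
  elementary_divisor_ring /\ condition_S d.

(* A finite free differential module of rank m is represented, in a basis,
   by R^m (row vectors) with D x = d(x) + x A, for a matrix A : 'M_m
   (row i of A = coordinates of D(e_i)). *)
Definition Dmod (d : R -> R) m (A : 'M[R]_m) (x : 'rV[R]_m) : 'rV[R]_m :=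
  map_mx d x + x *m A.

Definition is_dmorphism (d : R -> R) m k (A : 'M[R]_m) (B : 'M[R]_k)
  (P : 'M[R]_(m, k)) : Prop :=
  forall x : 'rV[R]_m, Dmod d B (x *m P) = Dmod d A x *m P.

(* n-element subsets of 'I_m: index the standard basis e_I of wedge^n R^m *)
Definition nsubset (m n : nat) := {I : {set 'I_m} | #|I| == n}.

(* the (I,J) n x n minor of P (rows of I and columns of J in increasing order) *)
Definition minor m k n (P : 'M[R]_(m, k)) (I : nsubset m n) (J : nsubset k n) : R :=
  \det (\matrix_(a < n, b < n)
          P (enum_val (cast_ord (esym (eqP (valP I))) a))
            (enum_val (cast_ord (esym (eqP (valP J))) b))).

(* wedge^n of x |-> x P, in the bases (e_I): e_I |-> sum_J minor P I J e_J *)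
Definition wedge_map m k n (P : 'M[R]_(m, k))
  (v : {ffun nsubset m n -> R}) : {ffun nsubset k n -> R} :=
  [ffun J => \sum_(I : nsubset m n) v I * minor P I J].

End Defs.

(* Let [U P V] be the Smith form of [P], with last nonzero invariant factor [a].
   Every invariant factor divides [a], so [a] kills the torsion of [coker P].
   Differentiating [a w = x P], where [w] is the basis vector of [R^k] matching
   [a], shows that [a] divides [d a]; thus [aR] is a differential ideal and, by
   Condition (S), [a] is a unit.  Hence [P] is equivalent to a partial identity
   [pid_mx r], so its kernel and cokernel are free on complementary parts of the
   new bases, and they are differential submodules/quotients because [P]
   commutes with [D].  When [P] is injective, [r = m] and [P] has a right
   inverse; a square [P] is then invertible, and by the Cauchy-Binet formula
   [wedge^n P] has a right inverse too. *)

From HB Require Import structures.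
From mathcomp Require Import all_boot all_order all_algebra fingroup perm.
Set Implicit Arguments. Unset Strict Implicit. Unset Printing Implicit Defensive.
Import GRing.Theory.
Local Open Scope ring_scope.

Section Derivation.
Variables (R : idomainType) (d : R -> R).
Hypothesis d_der : is_derivation d.

Lemma derivD x y : d (x + y) = d x + d y. Proof. by case: d_der. Qed.

Lemma derivM x y : d (x * y) = d x * y + x * d y. Proof. by case: d_der. Qed.

Lemma deriv0 : d 0 = 0.
Proof. by apply: (addrI (d 0)); rewrite -derivD !addr0. Qed.

Lemma map_mx_deriv0 m n : map_mx d (0 : 'M[R]_(m, n)) = 0.
Proof. by apply/matrixP=> i j; rewrite !mxE deriv0. Qed.

Lemma map_mx_derivM m n p (X : 'M[R]_(m, n)) (Y : 'M[R]_(n, p)) :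
  map_mx d (X *m Y) = map_mx d X *m Y + X *m map_mx d Y.
Proof.
apply/matrixP=> i j; rewrite !mxE (big_morph d derivD deriv0) -big_split /=.
by apply: eq_bigr => l _; rewrite !mxE derivM.
Qed.

Lemma map_mx_derivZ m n a (X : 'M[R]_(m, n)) :
  map_mx d (a *: X) = d a *: X + a *: map_mx d X.
Proof. by apply/matrixP=> i j; rewrite !mxE derivM. Qed.

Lemma DmodZ m (A : 'M[R]_m) a x : Dmod d A (a *: x) = d a *: x + a *: Dmod d A x.
Proof. by rewrite /Dmod map_mx_derivZ -scalemxAl scalerDr addrA. Qed.

Lemma dmorphismE m k (A : 'M[R]_m) (B : 'M[R]_k) P :
  is_dmorphism d A B P <-> map_mx d P + P *m B = A *m P.
Proof.
rewrite /is_dmorphism /Dmod; split => [hP | hP x].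
  apply/row_matrixP => i; have := hP (delta_mx 0 i).
  rewrite map_mx_derivM mulmxDl -addrA => /addrI.
  by rewrite !rowE mulmxDr !mulmxA.
by rewrite map_mx_derivM mulmxDl -addrA -!mulmxA -mulmxDr hP.
Qed.

Lemma dmorphism_inv m (A B P : 'M[R]_m) :
  is_dmorphism d A B P -> P \in unitmx -> is_dmorphism d B A (invmx P).
Proof.
move=> hP Pu y; apply: (can_inj (mulmxK Pu)).
by rewrite -hP mulmxKV // mulmxKV.
Qed.

End Derivation.

Section DifferentialKernel.
Variables (R : idomainType) (d : R -> R).
Hypothesis d_der : is_derivation d.
Variables (m k : nat) (A : 'M[R]_m) (B : 'M[R]_k) (P : 'M[R]_(m, k)).
Hypothesis P_dmorph : is_dmorphism d A B P.

Lemma ker_inclusion_dmorphism r (K : 'M[R]_(r, m)) (L : 'M[R]_(m, r)) :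
  K *m P = 0 -> (forall X : 'M[R]_(r, m), X *m P = 0 -> X *m L *m K = X) ->
  is_dmorphism d ((map_mx d K + K *m A) *m L) A K.
Proof.
move=> KP0 retract; apply/(dmorphismE d_der); rewrite retract //.
have /(dmorphismE d_der) dP := P_dmorph.
rewrite mulmxDl -mulmxA -dP mulmxDr addrA -map_mx_derivM // mulmxA KP0.
by rewrite mul0mx map_mx_deriv0 // addr0.
Qed.

Lemma coker_projection_dmorphism r (Q : 'M[R]_(k, r)) (Q' : 'M[R]_(r, k)) :
  P *m Q = 0 -> (forall W : 'M[R]_(k, r), P *m W = 0 -> Q *m Q' *m W = W) ->
  is_dmorphism d B (Q' *m (B *m Q - map_mx d Q)) Q.
Proof.
move=> PQ0 retract; apply/(dmorphismE d_der); rewrite mulmxA retract.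
  by rewrite addrC subrK.
have /(dmorphismE d_der) dP := P_dmorph.
have PB : P *m B = A *m P - map_mx d P by rewrite -dP addrC addKr.
rewrite mulmxBr mulmxA PB mulmxBl -mulmxA PQ0 mulmx0 sub0r -opprD.
by rewrite -map_mx_derivM // PQ0 map_mx_deriv0 // oppr0.
Qed.

End DifferentialKernel.

Section RowSpan.
Variable R : idomainType.

Definition in_rowspan m k (M : 'M[R]_(m, k)) (y : 'rV[R]_k) : Prop :=
  exists x, y = x *m M.

Definition kills_coker_torsion m k (M : 'M[R]_(m, k)) (a : R) : Prop :=
  forall (c : R) (y : 'rV[R]_k), c != 0 -> in_rowspan M (c *: y) -> in_rowspan M (a *: y).

End RowSpan.

Section DiagonalMatrix.
Variables (R : idomainType) (m k : nat) (S : 'M[R]_(m, k)).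
Hypothesis S_diag : forall (i : 'I_m) (j : 'I_k), i <> j :> nat -> S i j = 0.

Lemma diag_mulmx_entry (x : 'rV[R]_m) (i : 'I_m) (j : 'I_k) :
  i = j :> nat -> (x *m S) 0 j = x 0 i * S i j.
Proof.
move=> i_j; rewrite mxE (bigD1 i) //= big1 ?addr0 // => i' i'_neq.
by rewrite S_diag ?mulr0 // => i'_j; case/eqP: i'_neq; apply: val_inj; rewrite /= i'_j i_j.
Qed.

Lemma diag_mulmx_entry0 (x : 'rV[R]_m) (j : 'I_k) :
  (forall i : 'I_m, i = j :> nat -> S i j = 0) -> (x *m S) 0 j = 0.
Proof.
move=> col0; rewrite mxE big1 // => i _.
have [i_j|i_j] := eqVneq (i : nat) j; first by rewrite col0 ?mulr0.
by rewrite S_diag ?mulr0 //; apply/eqP.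
Qed.

Lemma diag_rowspan_dvd c (i : 'I_m) (j : 'I_k) : i = j :> nat ->
  in_rowspan S (c *: delta_mx 0 j) -> dvdR (S i j) c.
Proof.
move=> i_j [x /(congr1 (fun y : 'rV_k => y 0 j))].
by rewrite (diag_mulmx_entry _ i_j) !mxE !eqxx mulr1 => ->; exists (x 0 i).
Qed.

Lemma diag_row_rowspan (i : 'I_m) (j : 'I_k) : i = j :> nat -> in_rowspan S (S i j *: delta_mx 0 j).
Proof.
move=> i_j; exists (delta_mx 0 i); rewrite -rowE; apply/rowP => j'; rewrite !mxE eqxx.
have [->|j'_neq] := eqVneq j' j; first by rewrite mulr1.
by rewrite mulr0 S_diag // => i_j'; case/eqP: j'_neq; apply: val_inj; rewrite /= -i_j'.
Qed.

Lemma diag_kills_coker_torsion a :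
  (forall (i : 'I_m) (j : 'I_k), i = j :> nat -> S i j != 0 -> dvdR (S i j) a) ->
  kills_coker_torsion S a.
Proof.
move=> dvd_a c y c_neq0 [x cy_eq].
have y_col0 (j : 'I_k) : (forall i : 'I_m, i = j :> nat -> S i j = 0) -> y 0 j = 0.
  move=> col0; have /eqP := congr1 (fun z : 'rV_k => z 0 j) cy_eq.
  by rewrite /= diag_mulmx_entry0 // mxE mulf_eq0 (negPf c_neq0) => /eqP.
have coef (i : 'I_m) : exists e, forall j : 'I_k, i = j :> nat -> e * S i j = a * y 0 j.
  have [i_lt_k|k_le_i] := ltnP i k; last first.
    by exists 0 => j i_j; move: (ltn_ord j); rewrite -i_j ltnNge k_le_i.
  pose j : 'I_k := Ordinal i_lt_k.
  have eq_j (j' : 'I_k) : i = j' :> nat -> j' = j by move=> i_j'; apply: val_inj; rewrite /= -i_j'.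
  have [Sij0|Sij_neq0] := eqVneq (S i j) 0.
    exists 0 => j' /eq_j ->; rewrite mul0r y_col0 ?mulr0 // => i' i'_j.
    by have -> : i' = i by apply: val_inj; rewrite /= i'_j.
  have [q a_eq] := dvd_a i j erefl Sij_neq0.
  by exists (q * y 0 j) => j' /eq_j ->; rewrite a_eq mulrAC.
have [e e_eq] := fin_all_exists coef.
exists (\row_i e i); apply/rowP => j; rewrite [LHS]mxE.
have [j_lt_m|m_le_j] := ltnP j m.
  have i_j : Ordinal j_lt_m = j :> nat by [].
  by rewrite (diag_mulmx_entry _ i_j) mxE e_eq.
have col0 (i : 'I_m) : i = j :> nat -> S i j = 0.
  by move=> i_j; move: (ltn_ord i); rewrite i_j ltnNge m_le_j.
by rewrite diag_mulmx_entry0 // y_col0 // mulr0.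
Qed.

Lemma diag_pid_form r :
  (forall (i : 'I_m) (j : 'I_k), i = j :> nat ->
     if (i < r)%N then S i j \is a GRing.unit else S i j == 0) ->
  exists D, D \in unitmx /\ D *m S = pid_mx r.
Proof.
move=> S_units.
have coef (i : 'I_m) : exists e, e \is a GRing.unit /\
    forall j : 'I_k, i = j :> nat -> e * S i j = (i < r)%:R.
  have [i_lt_k|k_le_i] := ltnP i k; last first.
    exists 1; split=> [|j i_j]; first exact: unitr1.
    by move: (ltn_ord j); rewrite -i_j ltnNge k_le_i.
  pose j : 'I_k := Ordinal i_lt_k.
  have eq_j (j' : 'I_k) : i = j' :> nat -> j' = j by move=> i_j'; apply: val_inj; rewrite /= -i_j'.
  have := S_units i j erefl; case: ifP => _ Sij.
    by exists (S i j)^-1; split=> [|j' /eq_j ->]; rewrite ?unitrV ?mulVr.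
  by exists 1; split=> [|j' /eq_j ->]; rewrite ?unitr1 ?(eqP Sij) ?mulr0.
have [e e_eq] := fin_all_exists coef.
exists (diag_mx (\row_i e i)); split.
  by rewrite unitmxE det_diag; apply/unitr_prod => i _; rewrite mxE; case: (e_eq i).
apply/matrixP => i j; rewrite mul_diag_mx !mxE.
have [i_j|i_j] := eqVneq (i : nat) j; first by case: (e_eq i) => _ ->; rewrite // i_j eqxx.
by rewrite S_diag ?mulr0 //; apply/eqP.
Qed.

Lemma diag_last_nonzero : S = 0 \/ exists (i0 : 'I_m) (j0 : 'I_k),
  [/\ i0 = j0 :> nat, S i0 j0 != 0 &
      forall (i : 'I_m) (j : 'I_k), i = j :> nat -> (i0 < i)%N -> S i j = 0].
Proof.
pose nz n := [exists i : 'I_m, exists j : 'I_k, [&& i == n :> nat, j == n :> nat & S i j != 0]].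
have nzP (i : 'I_m) (j : 'I_k) : i = j :> nat -> S i j != 0 -> nz i.
  move=> i_j Sij; apply/existsP; exists i; apply/existsP; exists j.
  by rewrite eqxx -i_j eqxx Sij.
have [ex_nz|no_nz] := boolP [exists i : 'I_m, nz i]; last first.
  left; apply/matrixP => i j; rewrite mxE.
  have [i_j|/eqP i_j] := eqVneq (i : nat) j; last exact: S_diag.
  by apply/eqP; apply: contraNT no_nz => /(nzP i j i_j) nz_i; apply/existsP; exists i.
right; have nz_ex : exists n, nz n by case/existsP: ex_nz => n; exists (n : nat).
have nz_le n : nz n -> (n <= m)%N.
  by case/existsP => i /existsP [j /and3P [/eqP <- _ _]]; exact: ltnW.
case: (ex_maxnP nz_ex nz_le) => n /existsP [i0 /existsP [j0]].
case/and3P => /eqP i0_n /eqP j0_n Sij0 n_max.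
exists i0, j0; split => [|//|i j i_j]; first by rewrite i0_n j0_n.
rewrite i0_n => n_lt_i; apply/eqP; apply: contraTT n_lt_i => Sij.
by rewrite -leqNgt; apply/n_max/(nzP i j i_j).
Qed.

End DiagonalMatrix.

Section BasisChange.
Variables (R : idomainType) (m k : nat) (P : 'M[R]_(m, k)) (U : 'M[R]_m) (V : 'M[R]_k).
Hypotheses (U_unit : U \in unitmx) (V_unit : V \in unitmx).

Lemma in_rowspan_equiv y : in_rowspan (U *m P *m V) (y *m V) <-> in_rowspan P y.
Proof.
split => [[x /(congr1 (mulmx^~ (invmx V)))] | [x ->]]; last first.
  by exists (x *m invmx U); rewrite !mulmxA mulmxKV.
by rewrite /= !mulmxA !mulmxK // => ->; exists (x *m U).
Qed.

Lemma kills_coker_torsion_equiv a :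
  kills_coker_torsion (U *m P *m V) a -> kills_coker_torsion P a.
Proof.
move=> kills c y c_neq0 /in_rowspan_equiv cy_span; apply/in_rowspan_equiv.
by rewrite -scalemxAl; apply: (kills c); rewrite // scalemxAl.
Qed.

End BasisChange.

Lemma condition_S_unit (R : idomainType) (d : R -> R) (a : R) :
  is_derivation d -> condition_S d -> a != 0 -> dvdR a (d a) -> a \is a GRing.unit.
Proof.
move=> d_der condS a_neq0 [q da_eq].
have stable x : pideal a x -> pideal a (d x).
  by case=> r ->; exists (d r + r * q); rewrite derivM // da_eq mulrDl mulrA.
case: (condS a stable) => [ideal0|ideal1].
  by case/eqP: a_neq0; apply/ideal0; exists 1; rewrite mul1r.
by have [r r_a] := ideal1 1; apply/unitrPr; exists r; rewrite mulrC.
Qed.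

Section PidFormExists.
Variables (R : idomainType) (d : R -> R).
Hypothesis d_der : is_derivation d.
Variables (m k : nat) (A : 'M[R]_m) (B : 'M[R]_k) (P : 'M[R]_(m, k)).
Hypothesis P_dmorph : is_dmorphism d A B P.

(* Differentiating [a w = x P] gives [d(a) w + a D(w) = D(x) P], and [a D(w)]
   is torsion modulo the row span of [P] since [a (a D(w))] lies in it. *)
Lemma dmorphism_deriv_rowspan a w : a != 0 -> kills_coker_torsion P a ->
  in_rowspan P (a *: w) -> in_rowspan P (d a *: w).
Proof.
move=> a_neq0 kills [x aw_eq].
have D_aw : d a *: w + a *: Dmod d B w = Dmod d A x *m P by rewrite -DmodZ // aw_eq P_dmorph.
have aDw : a *: Dmod d B w = Dmod d A x *m P - d a *: w by rewrite -D_aw addrAC subrr add0r.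
have [z aDw_eq] : in_rowspan P (a *: Dmod d B w).
  apply: (kills (a * a)); first by rewrite mulf_neq0.
  exists (a *: Dmod d A x - d a *: x).
  rewrite -scalerA aDw scalerBr mulmxBl -!scalemxAl -aw_eq.
  by rewrite !scalerA mulrC.
by exists (Dmod d A x - z); rewrite mulmxBl -aDw_eq -D_aw addrK.
Qed.

Lemma dmorphism_pid_form : property_P d -> exists r (U : 'M[R]_m) (V : 'M[R]_k),
  [/\ (r <= m)%N, (r <= k)%N, U \in unitmx, V \in unitmx & U *m P *m V = pid_mx r].
Proof.
case=> EDR condS; have [U0 [V0 [U0u [V0u [S_diag S_chain]]]]] := EDR _ _ P.
set S := U0 *m P *m V0 in S_diag S_chain.
have [S0|[i0 [j0 [i0_j0 a_neq0 S_last]]]] := diag_last_nonzero S_diag.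
  by exists 0%N, U0, V0; rewrite pid_mx_0 -/S S0.
set a := S i0 j0 in a_neq0.
have chain_a (i : 'I_m) (j : 'I_k) : i = j :> nat -> (i <= i0)%N -> dvdR (S i j) a.
  by move=> i_j; apply: S_chain.
have kills : kills_coker_torsion P a.
  apply: (kills_coker_torsion_equiv U0u V0u); apply: diag_kills_coker_torsion => // i j i_j.
  move=> Sij; apply: chain_a => //; rewrite leqNgt; apply/negP => /(S_last i j i_j) S0.
  by rewrite S0 eqxx in Sij.
pose w : 'rV[R]_k := delta_mx 0 j0 *m invmx V0.
have w_V0 : w *m V0 = delta_mx 0 j0 by rewrite mulmxKV.
have aw_span : in_rowspan P (a *: w).
  by apply/(in_rowspan_equiv _ U0u V0u); rewrite -scalemxAl w_V0; exact: diag_row_rowspan.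
have /(in_rowspan_equiv _ U0u V0u) := dmorphism_deriv_rowspan a_neq0 kills aw_span.
rewrite -scalemxAl w_V0 => /(diag_rowspan_dvd S_diag i0_j0) /(condition_S_unit d_der condS a_neq0).
move=> a_unit; have [D [Du DS]] : exists D, D \in unitmx /\ D *m S = pid_mx i0.+1.
  apply: diag_pid_form => // i j i_j; case: ltnP => [i_le_i0|i0_lt_i]; last by rewrite S_last.
  by move: a_unit; have [q ->] := chain_a i j i_j i_le_i0; rewrite unitrM => /andP [].
exists i0.+1, (D *m U0), V0; split => //.
- by rewrite i0_j0.
- by rewrite unitmx_mul Du.
- by rewrite -DS /S !mulmxA.
Qed.

End PidFormExists.

Section PidForm.
Variable R : idomainType.

Definition tail_mx r m : 'M[R]_(m - r, m) := \matrix_(i, j) ((j : nat) == (r + i)%N)%:R.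

Lemma mul_tail_mx_tr r m : tail_mx r m *m (tail_mx r m)^T = 1%:M.
Proof.
apply/matrixP => i i'; rewrite !mxE.
have ri_lt_m : (r + i < m)%N by rewrite -ltn_subRL.
rewrite (bigD1 (Ordinal ri_lt_m)) //= big1 ?addr0 => [|j j_neq].
  by rewrite !mxE /= eqxx mul1r eqn_add2l.
rewrite !mxE; case: eqP => [j_eq|]; last by rewrite mul0r.
by case/eqP: j_neq; apply: val_inj; rewrite /= j_eq.
Qed.

Lemma mul_tr_tail_mx r m : (tail_mx r m)^T *m tail_mx r m = copid_mx r.
Proof.
apply/matrixP => i j; rewrite !mxE.
have [r_le_i|i_lt_r] := leqP r i; last first.
  rewrite big1 ?andbT ?subrr // => l _; rewrite !mxE.
  by case: eqP => [i_eq|]; [move: i_lt_r; rewrite i_eq ltnNge leq_addr | rewrite mul0r].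
have il : (i - r < m - r)%N by rewrite ltn_sub2r // (leq_ltn_trans r_le_i).
rewrite (bigD1 (Ordinal il)) //= big1 ?addr0 => [|l l_neq].
  by rewrite !mxE /= (subnKC r_le_i) eqxx mul1r andbF subr0 eq_sym.
rewrite !mxE; case: eqP => [i_eq|]; last by rewrite mul0r.
by case/eqP: l_neq; apply: val_inj; rewrite /= i_eq addKn.
Qed.

Lemma tail_mx_pid r m n : (r <= m)%N -> tail_mx r m *m (pid_mx r : 'M_(m, n)) = 0.
Proof.
move=> r_le_m; have -> : tail_mx r m = tail_mx r m *m copid_mx r.
  by rewrite -mul_tr_tail_mx mulmxA mul_tail_mx_tr mul1mx.
by rewrite -mulmxA mul_copid_mx_pid // mulmx0.
Qed.

Variables (m k r : nat) (P : 'M[R]_(m, k)) (U : 'M[R]_m) (V : 'M[R]_k).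
Hypotheses (r_le_m : (r <= m)%N) (r_le_k : (r <= k)%N).
Hypotheses (U_unit : U \in unitmx) (V_unit : V \in unitmx).
Hypothesis UPV : U *m P *m V = pid_mx r.

Lemma pid_formE : P = invmx U *m pid_mx r *m invmx V.
Proof. by rewrite -UPV !mulmxA mulVmx // mul1mx mulmxK. Qed.

Definition ker_basis := tail_mx r m *m U.
Definition ker_coord := invmx U *m (tail_mx r m)^T.
Definition coker_proj := V *m (tail_mx r k)^T.
Definition coker_sect := tail_mx r k *m invmx V.

Lemma ker_basis_coord : ker_basis *m ker_coord = 1%:M.
Proof. by rewrite mulmxA mulmxK // mul_tail_mx_tr. Qed.

Lemma ker_basis_mul : ker_basis *m P = 0.
Proof. by rewrite pid_formE !mulmxA mulmxK // tail_mx_pid // !mul0mx. Qed.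

Lemma ker_retract s (X : 'M[R]_(s, m)) : X *m P = 0 -> X *m ker_coord *m ker_basis = X.
Proof.
move=> XP0; have XUpid : X *m invmx U *m pid_mx r = 0 :> 'M_(s, k).
  by rewrite -mulmxA -UPV -mulmxA mulKmx // mulmxA XP0 mul0mx.
rewrite !mulmxA -(mulmxA _ _ (tail_mx r m)) mul_tr_tail_mx /copid_mx mulmxBr mulmx1.
by rewrite -(@pid_mx_id R m k m r r_le_k) mulmxA XUpid mul0mx subr0 mulmxKV.
Qed.

Lemma coker_sect_proj : coker_sect *m coker_proj = 1%:M.
Proof. by rewrite mulmxA mulmxKV // mul_tail_mx_tr. Qed.

Lemma mul_coker_proj : P *m coker_proj = 0.
Proof.
have pid_tail : (pid_mx r : 'M_(m, k)) *m (tail_mx r k)^T = 0.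
  by apply: trmx_inj; rewrite trmx_mul trmxK tr_pid_mx tail_mx_pid // trmx0.
by rewrite pid_formE !mulmxA mulmxKV // -mulmxA pid_tail mulmx0.
Qed.

Lemma coker_retract s (W : 'M[R]_(k, s)) : P *m W = 0 -> coker_proj *m coker_sect *m W = W.
Proof.
move=> PW0; have pidVW : pid_mx r *m (invmx V *m W) = 0 :> 'M_(m, s).
  by rewrite mulmxA -UPV mulmxK // -mulmxA PW0 mulmx0.
rewrite /coker_proj /coker_sect !mulmxA -(mulmxA V) mul_tr_tail_mx /copid_mx mulmxBr mulmx1.
rewrite !mulmxBl mulmxV // mul1mx -(@pid_mx_id R k m k r r_le_m) -!mulmxA pidVW.
by rewrite !mulmx0 subr0.
Qed.

Lemma coker_exact s (Y : 'M[R]_(s, k)) :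
  Y *m coker_proj = 0 -> Y = Y *m V *m pid_mx r *m U *m P.
Proof.
move=> YQ0; have YVcopid : Y *m V *m copid_mx r = 0.
  by rewrite -mul_tr_tail_mx mulmxA -(mulmxA Y) YQ0 mul0mx.
rewrite pid_formE !mulmxA mulmxK // -(mulmxA (Y *m V)) pid_mx_id //.
move: YVcopid; rewrite /copid_mx mulmxBr mulmx1 => /eqP; rewrite subr_eq0 => /eqP <-.
by rewrite mulmxK.
Qed.

Lemma pid_form_rinv : injective (fun x : 'rV[R]_m => x *m P) ->
  exists Q : 'M[R]_(k, m), P *m Q = 1%:M.
Proof.
move=> P_inj; have ker0 : ker_basis = 0.
  apply/row_matrixP => i; rewrite row0; apply: P_inj.
  by rewrite /= -row_mul ker_basis_mul row0 mul0mx.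
have r_eq_m : r = m.
  apply/eqP; rewrite eqn_leq r_le_m -subn_eq0; apply/eqP.
  move: ker_basis_coord; rewrite ker0 mul0mx; case: (m - r)%N => // n.
  by move/matrixP/(_ 0 0); rewrite !mxE eqxx => /eqP; rewrite eq_sym oner_eq0.
exists (V *m pid_mx r *m U).
rewrite pid_formE !mulmxA mulmxKV // -(mulmxA (invmx U) (pid_mx r)).
by rewrite pid_mx_id // r_eq_m pid_mx_1 mulmx1 mulVmx.
Qed.

Variables (d : R -> R) (A : 'M[R]_m) (B : 'M[R]_k).
Hypotheses (d_der : is_derivation d) (P_dmorph : is_dmorphism d A B P).

Lemma dmorphism_ker_free : exists r' (C : 'M[R]_r') (K : 'M[R]_(r', m)),
  is_dmorphism d C A K /\ injective (fun y : 'rV[R]_r' => y *m K) /\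
  (forall x : 'rV[R]_m, x *m P = 0 <-> exists y, x = y *m K).
Proof.
exists (m - r)%N; eexists; exists ker_basis; split; [|split].
- by apply: (ker_inclusion_dmorphism d_der P_dmorph ker_basis_mul) => X; apply: ker_retract.
- by apply: (can_inj (g := mulmx^~ ker_coord)) => y; rewrite -mulmxA ker_basis_coord mulmx1.
move=> x; split => [xP0|[y ->]]; last by rewrite -mulmxA ker_basis_mul mulmx0.
by exists (x *m ker_coord); rewrite ker_retract.
Qed.

Lemma dmorphism_coker_free : exists r' (C : 'M[R]_r') (Q : 'M[R]_(k, r')),
  is_dmorphism d B C Q /\ (forall z : 'rV[R]_r', exists y : 'rV[R]_k, z = y *m Q) /\
  (forall y : 'rV[R]_k, y *m Q = 0 <-> exists x, y = x *m P).
Proof.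
exists (k - r)%N; eexists; exists coker_proj; split; [|split].
- by apply: (coker_projection_dmorphism d_der P_dmorph mul_coker_proj) => W; apply: coker_retract.
- by move=> z; exists (z *m coker_sect); rewrite -mulmxA coker_sect_proj mulmx1.
move=> y; split => [yQ0|[x ->]]; last by rewrite -mulmxA mul_coker_proj mulmx0.
by exists (y *m V *m pid_mx r *m U); apply: coker_exact.
Qed.

End PidForm.

Section CauchyBinet.

Definition nsubset_elt k n (J : nsubset k n) (a : 'I_n) : 'I_k :=
  enum_val (cast_ord (esym (eqP (valP J))) a).

Lemma nsubset_elt_inj k n (J : nsubset k n) : injective (nsubset_elt J).
Proof. by move=> a b /enum_val_inj /cast_ord_inj. Qed.

Lemma nsubset_eltP k n (J : nsubset k n) a : nsubset_elt J a \in val J.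
Proof. exact: enum_valP. Qed.

Lemma nsubset_elt_onto k n (J : nsubset k n) x :
  x \in val J -> exists a, nsubset_elt J a = x.
Proof.
move=> xJ; exists (cast_ord (eqP (valP J)) (enum_rank_in xJ x)).
by rewrite /nsubset_elt cast_ordK enum_rankK_in.
Qed.

Definition nsubset_perm_fun k n (p : nsubset k n * 'S_n) : {ffun 'I_n -> 'I_k} :=
  [ffun i => nsubset_elt p.1 (p.2 i)].

Lemma mem_nsubset_perm_fun k n (p : nsubset k n * 'S_n) x :
  (x \in val p.1) = [exists i, nsubset_perm_fun p i == x].
Proof.
apply/idP/existsP => [xJ | [i /eqP <-]]; last by rewrite ffunE nsubset_eltP.
have [a <-] := nsubset_elt_onto xJ.
by exists ((p.2)^-1%g a); rewrite ffunE permKV.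
Qed.

Lemma nsubset_perm_fun_inj k n : injective (@nsubset_perm_fun k n).
Proof.
move=> [J s] [J' s'] eq_f.
have eq_J : J = J'.
  apply: val_inj; apply/setP => x.
  by rewrite (mem_nsubset_perm_fun (J, s)) (mem_nsubset_perm_fun (J', s')) eq_f.
subst J'; congr (_, _); apply/permP => i; apply: (@nsubset_elt_inj _ _ J).
by move/ffunP: eq_f => /(_ i); rewrite !ffunE.
Qed.

Lemma nsubset_perm_fun_im k n (f : {ffun 'I_n -> 'I_k}) :
  (f \in [set nsubset_perm_fun p | p in [set: nsubset k n * 'S_n]]) = injectiveb f.
Proof.
apply/imsetP/injectiveP => [[[J s] _ ->] | f_inj].
  by move=> i j; rewrite !ffunE => /nsubset_elt_inj /perm_inj.
have card_im : #|f @: [set: 'I_n]| == n by rewrite card_imset // cardsT card_ord.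
pose J : nsubset k n := exist (fun I : {set 'I_k} => #|I| == n) _ card_im.
have fJ i : f i \in val J by rewrite /= imset_f.
pose t i := cast_ord (eqP (valP J)) (enum_rank_in (fJ i) (f i)).
have eltJ_t i : nsubset_elt J (t i) = f i by rewrite /nsubset_elt /t cast_ordK enum_rankK_in.
have t_inj : injective t by move=> i j eq_t; apply: f_inj; rewrite -!eltJ_t eq_t.
exists (J, perm t_inj); first by rewrite inE.
by apply/ffunP => i; rewrite ffunE /= permE eltJ_t.
Qed.

Variable R : comNzRingType.

Lemma det_row_perm n (s : 'S_n) (M : 'M[R]_n) :
  \det (\matrix_(i, j) M (s i) j) = (-1) ^+ s * \det M.
Proof.
have -> : \matrix_(i, j) M (s i) j = perm_mx s *m M.
  by rewrite -row_permE; apply/matrixP => i j; rewrite !mxE.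
by rewrite det_mulmx det_perm.
Qed.

(* Expanding [\det (X *m Y)] gives a sum over all maps [f : 'I_n -> 'I_k]; the
   non-injective ones cancel, and the injective ones are the pairs (J, s). *)
Lemma cauchy_binet n k (X : 'M[R]_(n, k)) (Y : 'M[R]_(k, n)) :
  \det (X *m Y) = \sum_(J : nsubset k n)
     \det (\matrix_(a, b) X a (nsubset_elt J b)) *
     \det (\matrix_(a, b) Y (nsubset_elt J a) b).
Proof.
pose H (f : {ffun 'I_n -> 'I_k}) := (\prod_i X i (f i)) * \det (\matrix_(i, j) Y (f i) j).
transitivity (\sum_f H f).
  transitivity (\sum_(s : 'S_n) (-1) ^+ s *
      \sum_(f : {ffun 'I_n -> 'I_k}) \prod_i (X i (f i) * Y (f i) (s i))).
    apply: eq_bigr => s _; congr (_ * _).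
    rewrite -(bigA_distr_bigA (fun i l => X i l * Y l (s i))) /=.
    by apply: eq_bigr => i _; rewrite mxE.
  under eq_bigr do rewrite big_distrr.
  rewrite exchange_big; apply: eq_bigr => f _ /=.
  rewrite /H big_distrr; apply: eq_bigr => s _ /=.
  rewrite big_split /= mulrCA; congr (_ * (_ * _)).
  by apply: eq_bigr => i _; rewrite mxE.
rewrite (bigID (fun f : {ffun 'I_n -> 'I_k} => injectiveb f)) /= addrC big1 ?add0r; last first.
  move=> f /injectivePn [i1 [i2 i12 f12]].
  by rewrite /H (determinant_alternate i12) ?mulr0 // => j; rewrite !mxE f12.
symmetry; transitivity (\sum_J \sum_(s : 'S_n) H (nsubset_perm_fun (J, s))).
  apply: eq_bigr => J _; rewrite big_distrl /=; apply: eq_bigr => s _; rewrite /H.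
  have -> : \matrix_(i, j) Y (nsubset_perm_fun (J, s) i) j =
      \matrix_(i, j) (\matrix_(a, b) Y (nsubset_elt J a) b) (s i) j.
    by apply/matrixP => i j; rewrite !mxE ffunE.
  rewrite det_row_perm -mulrA mulrCA; congr (_ * _).
  by apply: eq_bigr => i _; rewrite mxE ffunE.
rewrite pair_big /= (eq_bigl _ _ (fun f => esym (nsubset_perm_fun_im f))) big_imset /=.
  by apply: eq_big => [p|[J s] _]; rewrite ?inE.
by move=> p q _ _; apply: nsubset_perm_fun_inj.
Qed.

End CauchyBinet.

Section ExteriorPower.
Variable R : idomainType.

Lemma minor_mul m k p n (P : 'M[R]_(m, k)) (Q : 'M[R]_(k, p))
    (I : nsubset m n) (L : nsubset p n) :
  minor (P *m Q) I L = \sum_(J : nsubset k n) minor P I J * minor Q J L.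
Proof.
have -> : minor (P *m Q) I L = \det ((\matrix_(a, j) P (nsubset_elt I a) j) *m
                                     (\matrix_(j, b) Q j (nsubset_elt L b))).
  rewrite /minor; congr (\det _); apply/matrixP => a b; rewrite !mxE.
  by apply: eq_bigr => j _; rewrite !mxE.
rewrite cauchy_binet; apply: eq_bigr => J _.
by rewrite /minor; congr (_ * _); congr (\det _); apply/matrixP => a b; rewrite !mxE.
Qed.

Lemma minor1 m n (I L : nsubset m n) : minor (1%:M : 'M[R]_m) I L = (I == L)%:R.
Proof.
have [<-|I_neq_L] := eqVneq I L.
  rewrite /minor -[RHS](det1 R n); congr (\det _); apply/matrixP => a b; rewrite !mxE.
  by rewrite -/(nsubset_elt I a) -/(nsubset_elt I b) (inj_eq (@nsubset_elt_inj _ _ I)).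
have /subsetPn [x xI xL] : ~~ (val I \subset val L).
  apply: contra I_neq_L => IL; apply/eqP/val_inj/eqP.
  by rewrite eqEcard IL (eqP (valP I)) (eqP (valP L)) leqnn.
have [a x_eq] := nsubset_elt_onto xI.
rewrite /minor (expand_det_row _ a) big1 // => b _.
rewrite !mxE -/(nsubset_elt I a) -/(nsubset_elt L b) x_eq.
by case: (x =P nsubset_elt L b) => [eq_xb|]; [move: xL; rewrite eq_xb nsubset_eltP | rewrite mul0r].
Qed.

Lemma wedge_mapM m k p n (P : 'M[R]_(m, k)) (Q : 'M[R]_(k, p)) v :
  wedge_map (n := n) Q (wedge_map P v) = wedge_map (P *m Q) v.
Proof.
apply/ffunP => L; rewrite !ffunE.
under eq_bigr do rewrite ffunE big_distrl /=.
rewrite exchange_big /=; apply: eq_bigr => I _.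
by rewrite minor_mul big_distrr /=; apply: eq_bigr => J _; rewrite mulrA.
Qed.

Lemma wedge_map1 m n v : wedge_map (n := n) (1%:M : 'M[R]_m) v = v.
Proof.
apply/ffunP => L; rewrite ffunE (bigD1 L) //= big1 ?addr0.
  by rewrite minor1 eqxx mulr1.
by move=> I I_neq_L; rewrite minor1 (negPf I_neq_L) mulr0.
Qed.

Lemma wedge_map_inj m k n (P : 'M[R]_(m, k)) (Q : 'M[R]_(k, m)) :
  P *m Q = 1%:M -> injective (@wedge_map R m k n P).
Proof.
move=> PQ1; apply: (can_inj (g := wedge_map Q)) => v.
by rewrite wedge_mapM PQ1 wedge_map1.
Qed.

End ExteriorPower.

Theorem lemma3p4 (R : idomainType) (d : R -> R)
  (Hd : is_derivation d) (HP : property_P d) :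
  (* (i) kernel and cokernel are finite free differential modules *)
  (forall m k (A : 'M[R]_m) (B : 'M[R]_k) (P : 'M[R]_(m, k)),
     is_dmorphism d A B P ->
     (exists r (C : 'M[R]_r) (K : 'M[R]_(r, m)),
        is_dmorphism d C A K /\
        injective (fun y : 'rV[R]_r => y *m K) /\
        (forall x : 'rV[R]_m, x *m P = 0 <-> exists y, x = y *m K)) /\
     (exists r (C : 'M[R]_r) (Q : 'M[R]_(k, r)),
        is_dmorphism d B C Q /\
        (forall z : 'rV[R]_r, exists y : 'rV[R]_k, z = y *m Q) /\
        (forall y : 'rV[R]_k, y *m Q = 0 <-> exists x, y = x *m P))) /\
  (* (ii) injective morphism between modules of equal rank is an isomorphism *)
  (forall m (A B : 'M[R]_m) (P : 'M[R]_m),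
     is_dmorphism d A B P -> injective (fun x : 'rV[R]_m => x *m P) ->
     exists Q : 'M[R]_m,
       is_dmorphism d B A Q /\ P *m Q = 1%:M /\ Q *m P = 1%:M) /\
  (* (iii) exterior powers of an injective morphism are injective *)
  (forall m k (A : 'M[R]_m) (B : 'M[R]_k) (P : 'M[R]_(m, k)),
     is_dmorphism d A B P -> injective (fun x : 'rV[R]_m => x *m P) ->
     forall n : nat, injective (@wedge_map R m k n P)).
Proof.
split; [|split] => [m k A B P P_dmorph | m A B P P_dmorph P_inj | m k A B P P_dmorph P_inj n];
  have [r [U [V [rm rk Uu Vu UPV]]]] := dmorphism_pid_form Hd P_dmorph HP.
- split; first exact: (dmorphism_ker_free rm rk Uu Vu UPV Hd P_dmorph).
  exact: (dmorphism_coker_free rm rk Uu Vu UPV Hd P_dmorph).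
- have [Q /mulmx1_unit [Pu _]] := pid_form_rinv rm rk Uu Vu UPV P_inj.
  by exists (invmx P); rewrite mulmxV ?mulVmx //; split => //; apply: dmorphism_inv.
- have [Q PQ] := pid_form_rinv rm rk Uu Vu UPV P_inj.
  exact: wedge_map_inj PQ.
Qed.
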